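(* Let $\mathcal{X}\subseteq\mathbb{R}^n$ and let $f_1,\dots,f_m$ be differentiable objective functions on $\mathcal{X}$. Fix $K\ge1$, a preference vector $\boldsymbol{\lambda}$ with $\lambda_i\ge0$, $\sum_i\lambda_i=1$, $\boldsymbol{z}^*\in\mathbb{R}^m$, and $\mu>0$, $\mu_1,\dots,\mu_m>0$. For $X_K=\{\boldsymbol{x}^{(1)},\dots,\boldsymbol{x}^{(K)}\}\subseteq\mathcal{X}$ define $$g^{(\mathrm{STCH\text{-}Set})}_{\mu,\{\mu_i\}}(X_K\mid\boldsymbol{\lambda})=\mu\log\left(\sum_{i=1}^m\exp\left(\frac{\lambda_i\left(-\mu_i\log\left(\sum_{k=1}^K e^{-f_i(\boldsymbol{x}^{(k)})/\mu_i}\right)-z_i^*\right)}{\mu}\right)\right),$$ viewed as a function of $(\boldsymbol{x}^{(1)},\dots,\boldsymbol{x}^{(K)})$. If there is a solution set $\hat X_K=\{\hat{\boldsymbol{x}}^{(1)},\dots,\hat{\boldsymbol{x}}^{(K)}\}$ such that $\nabla_{\hat{\boldsymbol{x}}^{(k)}}g^{(\mathrm{STCH\text{-}Set})}_{\mu,\{\mu_i\}}(\hat X_K\mid\boldsymbol{\lambda})=\boldsymbol{0}$ for every $k=1,\dots,K$, then every solution in $\hat X_K$ is a Pareto stationary solution of the multi-objective problem $\min_{\boldsymbol{x}\in\mathcal{X}}(f_1(\boldsymbol{x}),\dots,f_m(\boldsymbol{x}))$.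
   Context: A solution $\boldsymbol{x}\in\mathcal{X}$ is Pareto stationary if there exist weights $\alpha_1,\dots,\alpha_m\ge0$ with $\sum_{i=1}^m\alpha_i=1$ such that $\sum_{i=1}^m\alpha_i\nabla f_i(\boldsymbol{x})=\boldsymbol{0}$. *)

From HB Require Import structures.
From mathcomp Require Import all_boot all_order all_algebra.
From mathcomp Require Import all_classical all_reals all_analysis.
Set Implicit Arguments. Unset Strict Implicit. Unset Printing Implicit Defensive.
Import Order.TTheory GRing.Theory Num.Theory.
Import numFieldNormedType.Exports.
Local Open Scope ring_scope.

Section Defs.
Variable R : realType.

Definition grad n (h : 'rV[R]_n -> R) (x : 'rV[R]_n) : 'rV[R]_n :=
  \row_(j < n) ('D_(delta_mx 0 j) h x : R).

(* Partial gradient of G : 'M[R]_(K,n) -> R (a function of K points of R^n,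
   the k-th point being row k of the matrix) with respect to the k-th point. *)
Definition pgrad K n (G : 'M[R]_(K, n) -> R) (X : 'M[R]_(K, n)) (k : 'I_K)
  : 'rV[R]_n :=
  \row_(j < n) ('D_(delta_mx k j) G X : R).

Definition pareto_stationary m n (f : 'I_m -> 'rV[R]_n -> R) (x : 'rV[R]_n) :=
  exists alpha : 'I_m -> R,
    [/\ (forall i, 0 <= alpha i), \sum_(i < m) alpha i = 1 &
        \sum_(i < m) alpha i *: grad (f i) x = 0].

Definition stch_set m K n (mu : R) (mus : 'I_m -> R) (lam : 'I_m -> R)
  (zs : 'I_m -> R) (f : 'I_m -> 'rV[R]_n -> R) (X : 'M[R]_(K, n)) : R :=
  mu * ln (\sum_(i < m)
     expR (lam i * (- mus i * ln (\sum_(k < K) expR (- f i (row k X) / mus i))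
                    - zs i) / mu)).
End Defs.

From HB Require Import structures.
From mathcomp Require Import all_boot all_order all_algebra.
From mathcomp Require Import all_classical all_reals all_analysis.
From mathcomp Require Import ring.
Set Implicit Arguments. Unset Strict Implicit. Unset Printing Implicit Defensive.
Import Order.TTheory GRing.Theory Num.Theory.
Import numFieldNormedType.Exports.
Local Open Scope ring_scope.
Local Open Scope classical_set_scope.

(* The STCH-Set scalarization is built from the objectives by soft-min sums
   [T_i = \sum_k exp(-f_i(x_k)/mu_i)], exponentials [w_i] and an outer
   log-sum-exp, so the chain rule writes its partial gradient in the k-th
   point as a positive multiple of [\sum_i c_i grad f_i(x_k)] with
   [c_i = w_i lam_i exp(-f_i(x_k)/mu_i) / T_i].  These weights are nonnegative,
   and positive wherever [lam_i > 0], which happens for some [i] because the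
   [lam_i] sum to 1.  At a critical point this nontrivial conic combination of
   the gradients vanishes, and normalising it gives the Pareto weights. *)

Lemma psumr_gt0 (R : numDomainType) (I : finType) (F : I -> R) (i0 : I) :
  (forall i, 0 <= F i) -> 0 < F i0 -> 0 < \sum_i F i.
Proof.
move=> F_ge0 Fi0_gt0; rewrite (bigD1 i0) //=.
by rewrite ltr_pwDl // sumr_ge0.
Qed.

Section DirectionalDerivativeCalculus.
Variables (R : realType) (V : normedModType R).
Implicit Types (F G : V -> R) (x v : V).

Lemma is_derive_lineP F x v d :
  is_derive x v F d <-> is_derive (0 : R) 1 (fun h : R => F (h *: v + x)) d.
Proof.
have DE : 'D_v F x = 'D_1 (fun h : R => F (h *: v + x)) 0.
  rewrite /derive; do 2 f_equal; apply/funext => h /=.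
  by rewrite scale0r add0r addr0 [_%:A]mulr1.
split=> -[Fd <-]; apply: DeriveDef; rewrite ?DE //.
- exact: (derivable1P F x v).1.
- exact: (derivable1P F x v).2.
Qed.

Lemma is_derive_comp1 (g : R -> R) F x v a b :
  is_derive (F x) 1 g a -> is_derive x v F b ->
  is_derive x v (fun y => g (F y)) (a * b).
Proof.
move=> dg /is_derive_lineP dF; apply/is_derive_lineP.
by apply: (is_derive1_comp (f := g)); rewrite scale0r add0r.
Qed.

Lemma is_derive_affine F G x v a e b :
  is_derive x v F b -> (forall y, G y = a * F y + e) -> is_derive x v G (a * b).
Proof.
move=> dF /funext ->; rewrite -[a * b]addr0.
have -> : (fun y => a * F y + e) = (a \*: F) + cst e by [].
exact: is_deriveD.
Qed.

Lemma is_derive_sumr n (F : 'I_n -> V -> R) x v (b : 'I_n -> R) :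
  (forall i, is_derive x v (F i) (b i)) ->
  is_derive x v (fun y => \sum_(i < n) F i y) (\sum_(i < n) b i).
Proof.
move=> dF; have -> : (fun y => \sum_(i < n) F i y) = \sum_(i < n) F i.
  by apply/funext => y; rewrite fct_sumE.
exact: is_derive_sum.
Qed.

End DirectionalDerivativeCalculus.

Lemma is_derive_row (R : realType) K n (g : 'rV[R]_n -> R) (X v : 'M[R]_(K, n))
    (k : 'I_K) :
  differentiable g (row k X) ->
  is_derive X v (fun Y => g (row k Y)) ('D_(row k v) g (row k X)).
Proof.
move=> gX.
have /is_derive_lineP dg := derivableP (@diff_derivable _ _ _ g _ (row k v) gX).
apply/is_derive_lineP.
by under eq_fun do rewrite linearP.
Qed.

Lemma row_delta_mx (R : pzRingType) K n (k k' : 'I_K) (j : 'I_n) :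
  row k' (delta_mx k j : 'M[R]_(K, n)) = delta_mx 0 j *+ (k' == k).
Proof. by rewrite rowE mul_delta_mx_cond. Qed.

Lemma pareto_stationary_conic (R : realType) m n (f : 'I_m -> 'rV[R]_n -> R)
    (x : 'rV[R]_n) (c : 'I_m -> R) :
  (forall i, 0 <= c i) -> 0 < \sum_i c i ->
  \sum_i c i *: grad (f i) x = 0 -> pareto_stationary f x.
Proof.
move=> c_ge0 C_gt0 crit; exists (fun i => c i / \sum_i c i); split.
- by move=> i; rewrite divr_ge0 // ltW.
- by rewrite -mulr_suml divff // gt_eqF.
- under eq_bigr do rewrite mulrC -scalerA.
  by rewrite -scaler_sumr crit scaler0.
Qed.

Section StchSetGradient.
Variables (R : realType) (m K n : nat) (mu : R) (mus lam zs : 'I_m -> R).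
Variable f : 'I_m -> 'rV[R]_n -> R.

Definition softsum i (X : 'M[R]_(K, n)) :=
  \sum_(k < K) expR (- f i (row k X) / mus i).

Definition stch_weight i X :=
  expR (lam i * (- mus i * ln (softsum i X) - zs i) / mu).

Definition stch_coef i k X :=
  stch_weight i X * lam i * expR (- f i (row k X) / mus i) / softsum i X.

Lemma softsum_gt0 i X : (0 < K)%N -> 0 < softsum i X.
Proof.
by move=> K_gt0; apply: (psumr_gt0 (i0 := Ordinal K_gt0)) => *;
  rewrite ?expR_ge0 ?expR_gt0.
Qed.

Lemma stch_coef_ge0 i k X : 0 <= lam i -> 0 <= stch_coef i k X.
Proof.
move=> lam_ge0; rewrite divr_ge0 ?mulr_ge0 ?expR_ge0 //.
by apply: sumr_ge0 => *; rewrite expR_ge0.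
Qed.

Lemma stch_coef_gt0 i k X : 0 < lam i -> 0 < stch_coef i k X.
Proof.
move=> lam_gt0; rewrite divr_gt0 ?mulr_gt0 ?expR_gt0 //.
exact/softsum_gt0/(leq_ltn_trans (leq0n k)).
Qed.

Lemma stch_weight_sum_gt0 X : (0 < m)%N -> 0 < \sum_i stch_weight i X.
Proof.
by move=> m_gt0; apply: (psumr_gt0 (i0 := Ordinal m_gt0)) => *;
  rewrite /stch_weight ?expR_ge0 ?expR_gt0.
Qed.

Hypotheses (mu_neq0 : mu != 0) (mus_neq0 : forall i, mus i != 0).

Variable X : 'M[R]_(K, n).
Hypothesis f_diff : forall i k, differentiable (f i) (row k X).

Lemma is_derive_softsum v i :
  is_derive X v (softsum i) (- (mus i)^-1 *
    \sum_k expR (- f i (row k X) / mus i) * 'D_(row k v) (f i) (row k X)).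
Proof.
have dE k : is_derive X v (fun Y => expR (- f i (row k Y) / mus i))
    (expR (- f i (row k X) / mus i) *
     (- (mus i)^-1 * 'D_(row k v) (f i) (row k X))).
  apply: is_derive_comp1 (is_derive_expR _) _.
  apply: (is_derive_affine (e := 0) (is_derive_row v (f_diff i k))) => Y.
  by rewrite addr0 mulrC mulNr mulrN.
apply: is_derive_eq (is_derive_sumr dE) _.
by rewrite mulr_sumr; apply: eq_bigr => k _; ring.
Qed.

Lemma is_derive_stch_weight v i : (0 < K)%N ->
  is_derive X v (stch_weight i)
    (mu^-1 * \sum_k stch_coef i k X * 'D_(row k v) (f i) (row k X)).
Proof.
move=> K_gt0; have T_gt0 := softsum_gt0 i X K_gt0.
have dlnT := is_derive_comp1 (is_derive1_ln T_gt0) (is_derive_softsum v i).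
pose a Y := lam i * (- mus i * ln (softsum i Y) - zs i) / mu.
have da := is_derive_affine (G := a) (a := - lam i * mus i / mu)
  (e := - lam i * zs i / mu) dlnT.
apply: is_derive_eq (is_derive_comp1 (is_derive_expR _) (da _)) _ => [Y|].
  by rewrite /a; ring.
rewrite !mulr_sumr; apply: eq_bigr => k _.
rewrite /stch_coef /stch_weight; field.
by rewrite gt_eqF // mus_neq0 mu_neq0.
Qed.

Lemma is_derive_stch_set v : (0 < m)%N -> (0 < K)%N ->
  is_derive X v (stch_set mu mus lam zs f) ((\sum_i stch_weight i X)^-1 *
    \sum_i \sum_k stch_coef i k X * 'D_(row k v) (f i) (row k X)).
Proof.
move=> m_gt0 K_gt0; have S_gt0 := stch_weight_sum_gt0 X m_gt0.
have dS := is_derive_sumr (fun i => is_derive_stch_weight v i K_gt0).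
have dlnS := is_derive_comp1 (is_derive1_ln S_gt0) dS.
apply: is_derive_eq (is_derive_affine (a := mu) (e := 0) dlnS _) _ => [Y|].
  by rewrite addr0.
by rewrite -mulr_sumr mulrCA mulVKf.
Qed.

Lemma pgrad_stch_set k : (0 < m)%N ->
  pgrad (stch_set mu mus lam zs f) X k =
  (\sum_i stch_weight i X)^-1 *: \sum_i stch_coef i k X *: grad (f i) (row k X).
Proof.
move=> m_gt0; have K_gt0 : (0 < K)%N := leq_ltn_trans (leq0n k) (ltn_ord k).
apply/rowP => j; have dG := is_derive_stch_set (delta_mx k j) m_gt0 K_gt0.
rewrite !mxE derive_val summxE.
congr (_ * _); apply: eq_bigr => i _.
rewrite (bigD1 k) //= big1 => [|k' k'k]; last first.
  by rewrite row_delta_mx (negbTE k'k) mulr0n derive0 mulr0.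
by rewrite row_delta_mx eqxx mulr1n addr0 !mxE.
Qed.

End StchSetGradient.

Theorem theorem4 (R : realType) (n m K : nat) (dom : set 'rV[R]_n)
  (f : 'I_m -> 'rV[R]_n -> R)
  (hf : forall i x, dom x -> differentiable (f i) x)
  (hK : (1 <= K)%N)
  (lam : 'I_m -> R) (hlam0 : forall i, 0 <= lam i)
  (hlam1 : \sum_(i < m) lam i = 1)
  (zs : 'I_m -> R) (mu : R) (hmu : 0 < mu)
  (mus : 'I_m -> R) (hmus : forall i, 0 < mus i)
  (Xh : 'M[R]_(K, n)) (hXh : forall k, dom (row k Xh))
  (hcrit : forall k, pgrad (stch_set mu mus lam zs f) Xh k = 0) :
  forall k, pareto_stationary f (row k Xh).
Proof.
(* [hK] is not needed: the index [k] already makes [K] positive. *)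
move=> k.
have [i0 /andP[_ lam_i0_gt0]] : exists i, true && (0 < lam i).
  apply: psumr_neq0P => [i _|]; first exact: hlam0.
  by rewrite hlam1; apply/eqP; rewrite oner_eq0.
have m_gt0 : (0 < m)%N := leq_ltn_trans (leq0n i0) (ltn_ord i0).
have Xh_diff i k' : differentiable (f i) (row k' Xh) := hf i _ (hXh k').
have mu_neq0 : mu != 0 := lt0r_neq0 hmu.
have mus_neq0 i : mus i != 0 := lt0r_neq0 (hmus i).
have := hcrit k; rewrite pgrad_stch_set // => /eqP.
rewrite scaler_eq0 invr_eq0 gt_eqF ?stch_weight_sum_gt0 //= => /eqP crit.
apply: (pareto_stationary_conic _ _ crit) => [i|]; first exact: stch_coef_ge0.
apply: (psumr_gt0 (i0 := i0)) => [i|]; first exact: stch_coef_ge0.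
exact: stch_coef_gt0.
Qed.
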